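(* Let $X$, $Y$ be metrizable spaces, $f:X\to Y$, and let $\xi$ be a countable ordinal with $\xi>1$. The following are equivalent: (i) $f^{-1}(A)\in\mathbf{\Sigma}^0_\xi(X)$ for every $A\in\mathbf{\Sigma}^0_\xi(Y)$; (ii) $f^{-1}(A)\in\mathbf{\Pi}^0_\xi(X)$ for every $A\in\mathbf{\Pi}^0_\xi(Y)$; (iii) $f^{-1}(A)\in\mathbf{\Delta}^0_\xi(X)$ for every $A\in\mathbf{\Delta}^0_\xi(Y)$; (iv) $f^{-1}(A)\in\mathbf{\Sigma}^0_\xi(X)$ for every $\nu<\xi$ and every $A\in\mathbf{\Pi}^0_\nu(Y)$; (v) $f^{-1}(A)\in\mathbf{\Delta}^0_\xi(X)$ for every $\nu<\xi$ and every $A\in\mathbf{\Sigma}^0_\nu(Y)$.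
   Context: Work in ZF plus countable choice over the reals. $\mathbf{\Sigma}^0_\nu,\mathbf{\Pi}^0_\nu,\mathbf{\Delta}^0_\nu$ denote the levels of the Borel hierarchy, with the convention $\mathbf{\Sigma}^0_0=\mathbf{\Pi}^0_0=\mathbf{\Delta}^0_0=\mathbf{\Delta}^0_1$ (the clopen sets). *)

From HB Require Import structures.
From mathcomp Require Import all_boot all_order all_algebra.
From mathcomp Require Import all_classical all_reals all_analysis.
Set Implicit Arguments. Unset Strict Implicit. Unset Printing Implicit Defensive.
Import Order.TTheory GRing.Theory Num.Theory.
Local Open Scope classical_set_scope.
Local Open Scope ring_scope.

Definition metrizable (R : realType) (T : topologicalType) : Prop :=
  exists d : T -> T -> R,
    [/\ (forall x y, 0 <= d x y),
        (forall x y, d x y = 0 <-> x = y),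
        (forall x y, d x y = d y x),
        (forall x y z, d x z <= d x y + d y z) &
        (forall U : set T, open U <->
           (forall x, U x -> exists2 e : R, 0 < e & [set y | d x y < e] `<=` U))].

(** Countable ordinals are represented by elements of countable well-ordered
    types: the ordinal represented by [xi : W] is the order type of the set of
    its strict predecessors. Every countable ordinal arises this way (take
    W = xi + 1) and the Borel classes only depend on that order type. *)
Record cwo := CWO {
  cwo_car :> Type;
  cwo_lt : cwo_car -> cwo_car -> Prop;
  cwo_wf : well_founded cwo_lt;
  cwo_irr : forall x, ~ cwo_lt x x;
  cwo_trans : forall x y z, cwo_lt x y -> cwo_lt y z -> cwo_lt x z;
  cwo_total : forall x y, [\/ cwo_lt x y, x = y | cwo_lt y x];
  cwo_countable : exists f : cwo_car -> nat, injective f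
}.

Section Borel.
Variables (X : topologicalType) (W : cwo).

Definition ord_is0 (xi : W) : Prop := forall nu, ~ cwo_lt nu xi.
Definition ord_is1 (xi : W) : Prop :=
  exists2 z, cwo_lt z xi & forall nu, cwo_lt nu xi -> nu = z.

Definition Sigma_step (xi : W)
  (rec : forall nu : W, cwo_lt nu xi -> set (set X)) : set (set X) :=
  fun A =>
    (ord_is0 xi /\ clopen A) \/
    (ord_is1 xi /\ open A) \/
    [/\ ~ ord_is0 xi, ~ ord_is1 xi &
      exists (B : nat -> set X) (nu : nat -> W) (h : forall n, cwo_lt (nu n) xi),
        (forall n, rec (nu n) (h n) (~` B n)) /\ A = \bigcup_n B n].

Definition Sigma0 : W -> set (set X) :=
  Fix (@cwo_wf W) (fun _ => set (set X)) Sigma_step.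

Definition Pi0 (xi : W) : set (set X) := fun A => Sigma0 xi (~` A).

Definition Delta0 (xi : W) : set (set X) := fun A => Sigma0 xi A /\ Pi0 xi A.

End Borel.

Arguments Sigma0 X {W} xi.
Arguments Pi0 X {W} xi.
Arguments Delta0 X {W} xi.

From HB Require Import structures.
From mathcomp Require Import all_boot all_order all_algebra.
From mathcomp Require Import all_classical all_reals all_analysis.
Import Order.TTheory GRing.Theory Num.Theory.
Local Open Scope classical_set_scope.

(* For xi >= 2, Sigma^0_xi is closed under countable unions and contains
   Pi^0_nu for every nu < xi; in a metrizable space it also contains
   Sigma^0_nu, because open sets are countable unions of closed sets.  With
   these inclusions, each of (ii)-(v) is reduced to (i) by taking complements
   or by writing a Sigma^0_xi set as a countable union of Pi^0_nu sets. *)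

Lemma metrizable_open_bigcup_closed {R : realType} {T : topologicalType}
    {A : set T} :
  metrizable R T -> open A ->
  exists F : nat -> set T, (forall n, closed (F n)) /\ A = \bigcup_n F n.
Proof.
move=> [d [_ d0 dC dT dO]] oA.
pose F n := [set x | forall y, (d x y < n.+1%:R^-1)%R -> A y].
exists F; split.
  move=> n; rewrite -openC; apply/dO => x /existsNP [y /not_implyP [dxy nAy]].
  exists (n.+1%:R^-1 - d x y)%R; first by rewrite subr_gt0.
  move=> z /= dxz Fz; apply/nAy/Fz.
  by rewrite (le_lt_trans (dT z x y)) // dC -ltrBrDr.
apply/seteqP; split => x; last by move=> [n _]; apply; rewrite (d0 x x).2.
move=> Ax; have [e e0 ballA] := (dO A).1 oA x Ax.
have [N _ /(_ N (leqnn N)) Ne] := near_infty_natSinv_lt (PosNum e0).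
by exists N => // y dxy; apply/ballA/(lt_trans dxy).
Qed.

Definition ord_ge2 {W : cwo} (xi : W) := ~ ord_is0 xi /\ ~ ord_is1 xi.

Lemma ord_ge2_chain {W : cwo} {xi : W} :
  (exists a b : W, cwo_lt a b /\ cwo_lt b xi) -> ord_ge2 xi.
Proof.
move=> [a [b [ab bxi]]]; split; first by move/(_ b).
move=> [z _ zE]; apply: (@cwo_irr W a).
by rewrite {2}(zE a (cwo_trans ab bxi)) -(zE b bxi).
Qed.

Section Sigma0Theory.
Variables (T : topologicalType) (W : cwo).

Lemma Sigma0E (xi : W) (A : set T) : Sigma0 T xi A <->
    (ord_is0 xi /\ clopen A) \/
    (ord_is1 xi /\ open A) \/
    [/\ ~ ord_is0 xi, ~ ord_is1 xi &
      exists (B : nat -> set T) (nu : nat -> W) (h : forall n, cwo_lt (nu n) xi),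
        (forall n, Sigma0 T (nu n) (~` B n)) /\ A = \bigcup_n B n].
Proof.
rewrite /Sigma0 Fix_eq // => x f g fg.
suff -> : f = g by [].
by apply: functional_extensionality_dep => y; apply: functional_extensionality_dep.
Qed.

Variable xi : W.
Hypothesis xi_ge2 : ord_ge2 xi.

Lemma Sigma0_ge2E (A : set T) : Sigma0 T xi A <->
  exists (B : nat -> set T) (nu : nat -> W),
    [/\ forall n, cwo_lt (nu n) xi, forall n, Pi0 T (nu n) (B n) &
        A = \bigcup_n B n].
Proof.
case: xi_ge2 => not0 not1; rewrite Sigma0E; split.
  by case=> [[]//|[[]//|[_ _ [B [nu [h [HB ->]]]]]]]; exists B, nu.
by move=> [B [nu [h HB ->]]]; right; right; split => //; exists B, nu, h.
Qed.

Lemma Sigma0_bigcup (C : nat -> set T) :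
  (forall n, Sigma0 T xi (C n)) -> Sigma0 T xi (\bigcup_n C n).
Proof.
move=> /(_ _)/Sigma0_ge2E SC.
have /choice [p Cp] : forall n, exists p : (nat -> set T) * (nat -> W),
    [/\ forall m, cwo_lt (p.2 m) xi, forall m, Pi0 T (p.2 m) (p.1 m) &
        C n = \bigcup_m p.1 m].
  by move=> n; have [B [nu HB]] := SC n; exists (B, nu).
(* reindex the double union by nat, through the countable type nat * nat *)
pose g k := odflt (0, 0)%N (unpickle k : option (nat * nat)).
apply/Sigma0_ge2E.
exists (fun k => (p (g k).1).1 (g k).2), (fun k => (p (g k).1).2 (g k).2).
split; [by move=> k; case: (Cp (g k).1) | by move=> k; case: (Cp (g k).1) |].
apply/seteqP; split => x.
  move=> [n _]; case: (Cp n) => _ _ -> [m _ Bx].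
  by exists (pickle (n, m)) => //; rewrite /g pickleK.
move=> [k _ Bx]; exists (g k).1 => //.
by case: (Cp (g k).1) => _ _ ->; exists (g k).2.
Qed.

Lemma Pi0_sub_Sigma0 (nu : W) (A : set T) :
  cwo_lt nu xi -> Pi0 T nu A -> Sigma0 T xi A.
Proof.
move=> nu_xi PA; apply/Sigma0_ge2E; exists (fun=> A), (fun=> nu); split => //.
by rewrite bigcup_const.
Qed.
Arguments Pi0_sub_Sigma0 {nu A}.

Lemma Sigma0_sub_Sigma0 (R : realType) (nu : W) (A : set T) :
  metrizable R T -> cwo_lt nu xi -> Sigma0 T nu A -> Sigma0 T xi A.
Proof.
move=> mT nu_xi /Sigma0E [[nu0 cA]|[[nu1 oA]|[_ _ [B [mu [mu_nu [HB ->]]]]]]].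
- apply: (Pi0_sub_Sigma0 nu_xi); apply/Sigma0E; left; split => //.
  exact: clopenC.
- have [F [cF ->]] := metrizable_open_bigcup_closed mT oA.
  apply: Sigma0_bigcup => n; apply: (Pi0_sub_Sigma0 nu_xi).
  by apply/Sigma0E; right; left; split => //; rewrite openC.
- apply/Sigma0_ge2E; exists B, mu; split => // n.
  exact: cwo_trans (mu_nu n) nu_xi.
Qed.

End Sigma0Theory.

Arguments Sigma0_ge2E {T W xi}.
Arguments Sigma0_bigcup {T W xi}.
Arguments Pi0_sub_Sigma0 {T W xi} xi_ge2 {nu A}.
Arguments Sigma0_sub_Sigma0 {T W xi} xi_ge2 {R nu A}.

Lemma preimage_Sigma0_Pi0 (X Y : topologicalType) (W : cwo) (f : X -> Y)
    (xi : W) :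
  (forall A, Sigma0 Y xi A -> Sigma0 X xi (f @^-1` A)) <->
  (forall A, Pi0 Y xi A -> Pi0 X xi (f @^-1` A)).
Proof.
split=> Hf A HA; first by rewrite /Pi0 preimage_setC; exact: Hf.
by rewrite -[A]setCK -preimage_setC; apply: Hf; rewrite /Pi0 setCK.
Qed.

Theorem mainTheorem7 (R : realType) (X Y : topologicalType)
  (hX : metrizable R X) (hY : metrizable R Y) (f : X -> Y)
  (W : cwo) (xi : W) (hxi : exists a b : W, cwo_lt a b /\ cwo_lt b xi) :
  let P1 := forall A, Sigma0 Y xi A -> Sigma0 X xi (f @^-1` A) in
  let P2 := forall A, Pi0 Y xi A -> Pi0 X xi (f @^-1` A) in
  let P3 := forall A, Delta0 Y xi A -> Delta0 X xi (f @^-1` A) in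
  let P4 := forall nu : W, cwo_lt nu xi ->
              forall A, Pi0 Y nu A -> Sigma0 X xi (f @^-1` A) in
  let P5 := forall nu : W, cwo_lt nu xi ->
              forall A, Sigma0 Y nu A -> Delta0 X xi (f @^-1` A) in
  [/\ P1 <-> P2, P1 <-> P3, P1 <-> P4 & P1 <-> P5].
Proof.
have xi2 := ord_ge2_chain hxi.
move=> P1 P2 P3 P4 P5.
have P12 : P1 <-> P2 by exact: preimage_Sigma0_Pi0.
have P41 : P4 -> P1.
  move=> H4 A /(Sigma0_ge2E xi2) [B [nu [nu_xi PB ->]]].
  by rewrite preimage_bigcup; apply: (Sigma0_bigcup xi2) => n; exact: H4.
have P13 : P1 -> P3 by move=> H1 A [SA PA]; split; [exact: H1 | exact: P12.1].
have P34 : P3 -> P4.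
  move=> H3 nu nu_xi A PA; apply: (H3 A _).1; split.
    exact (Pi0_sub_Sigma0 xi2 nu_xi PA).
  exact (Sigma0_sub_Sigma0 xi2 hY nu_xi PA).
have P15 : P1 -> P5.
  move=> H1 nu nu_xi A SA; apply: P13 => //; split.
    exact (Sigma0_sub_Sigma0 xi2 hY nu_xi SA).
  by apply: (Pi0_sub_Sigma0 xi2 nu_xi); rewrite /Pi0 setCK.
have P54 : P5 -> P4.
  move=> H5 nu nu_xi A PA; have [_] := H5 nu nu_xi _ PA.
  by rewrite /Pi0 preimage_setC setCK.
split; [exact: P12 | split | split | split].
- exact: P13.
- by move=> H3; apply/P41/P34.
- by move=> H1; apply/P34/P13.
- exact: P41.
- exact: P15.
- by move=> H5; apply/P41/P54.
Qed.
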